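(* Fix a monomial order on $S$. Let $J$ be a binomial ideal of $S$ (an ideal generated by binomials) and $E$ a monomial ideal of $S$. Then $J+E=J+\widehat E$.
   Context: $K$ is a field and $S=K[x_1,\ldots,x_n]$ with a fixed monomial order. For $0\neq f\in S$, $\mathrm{in}(f)$ denotes its leading monomial; for an ideal $I$, $\mathrm{in}(I)$ is the ideal generated by the leading monomials of the nonzero elements of $I$. A pair $(J,E)$ of ideals is G-nice if $\mathrm{in}(J+E)=\mathrm{in}(J)+\mathrm{in}(E)$. For an ideal $J$ and a monomial ideal $E$, $\widehat E$ (the G-nice monomial closure of $E$ with respect to $J$) is the intersection of all monomial ideals $F$ of $S$ with $E\subseteq F$ and $(J,F)$ G-nice. *)

From HB Require Import structures.
From mathcomp Require Import all_boot all_order all_algebra.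
From mathcomp Require Import mpoly.
Set Implicit Arguments. Unset Strict Implicit. Unset Printing Implicit Defensive.
Import GRing.Theory.
Local Open Scope ring_scope.

(* Ideals of S = K[x_1,...,x_n] are represented as predicates (Prop-valued). *)
Section Defs.
Variables (K : fieldType) (n : nat).
Local Notation S := {mpoly K[n]}.
Local Notation mon := 'X_{1..n}.

(* A monomial order on the monomials 'X_{1..n}: a total order, compatible
   with multiplication of monomials (= addition of exponent vectors), and
   with 1 (= exponent 0) as least element. *)
Definition monomial_order (le : rel mon) : Prop :=
  [/\ reflexive le, antisymmetric le, transitive le, total le &
      ((forall m, le 0%MM m) /\
       (forall m1 m2 m, le m1 m2 -> le (m1 + m)%MM (m2 + m)%MM))].

(* leading monomial in(f): the le-maximum of the support of f
   (meaningful for f != 0 and le a total order). *)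
Definition lead_mon (le : rel mon) (f : S) : mon :=
  foldr (fun m acc => if le acc m then m else acc) 0%MM (msupp f).

Definition is_ideal (I : S -> Prop) : Prop :=
  [/\ I 0, (forall a b, I a -> I b -> I (a + b)) &
      (forall r a, I a -> I (r * a))].

Definition gen_ideal (G : S -> Prop) : S -> Prop :=
  fun p => forall I, is_ideal I -> (forall g, G g -> I g) -> I p.

Definition ideal_sum (I1 I2 : S -> Prop) : S -> Prop :=
  fun p => exists a b, [/\ I1 a, I2 b & p = a + b].

Definition ideal_eq (I1 I2 : S -> Prop) : Prop := forall p, I1 p <-> I2 p.

Definition is_monomial (p : S) : Prop := exists m : mon, p = 'X_[m].

Definition is_binomial (p : S) : Prop := (size (msupp p) <= 2)%N.

Definition is_monomial_ideal (E : S -> Prop) : Prop :=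
  exists G : S -> Prop, (forall g, G g -> is_monomial g) /\ ideal_eq E (gen_ideal G).

Definition is_binomial_ideal (J : S -> Prop) : Prop :=
  exists G : S -> Prop, (forall g, G g -> is_binomial g) /\ ideal_eq J (gen_ideal G).

Definition init_ideal (le : rel mon) (I : S -> Prop) : S -> Prop :=
  gen_ideal (fun q => exists f, [/\ I f, f != 0 & q = 'X_[lead_mon le f]]).

Definition G_nice (le : rel mon) (J E : S -> Prop) : Prop :=
  ideal_eq (init_ideal le (ideal_sum J E))
           (ideal_sum (init_ideal le J) (init_ideal le E)).

(* \hat E: intersection of all monomial ideals F with E ⊆ F and (J,F) G-nice *)
Definition Gnice_closure (le : rel mon) (J E : S -> Prop) : S -> Prop :=
  fun p => forall F : S -> Prop, is_monomial_ideal F ->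
    (forall q, E q -> F q) -> G_nice le J F -> F p.

End Defs.

From HB Require Import structures.
From mathcomp Require Import all_boot all_order all_algebra.
From mathcomp Require Import mpoly.
From mathcomp Require Import zify.
From Stdlib Require Import ClassicalEpsilon.
Set Implicit Arguments. Unset Strict Implicit. Unset Printing Implicit Defensive.
Import GRing.Theory.
Local Open Scope ring_scope.

(* Let F be the ideal generated by the
   monomials lying in J + E, so that E ⊆ F ⊆ J + E.  For an ideal I, [strip I f]
   deletes from f every term whose monomial lies in I.  Stripping is additive,
   kills every multiple of a monomial contained in I (a single term not in I
   cannot lie in I), and maps a binomial of J into J (at most one term
   survives when something is stripped, and then everything vanishes).  Hence
   [strip (J + F)] maps J + F into J.  If f ∈ J + F has leading monomial u,
   either X^u ∈ J + F, so X^u ∈ F and u ∈ in(F), or u survives stripping and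
   u = in(strip f) ∈ in(J).  So (J, F) is G-nice; by definition the closure
   of E is then contained in F ⊆ J + E, while E is contained in its closure,
   which gives J + E = J + closure(E). *)

Section Ideals.
Variables (K : fieldType) (n : nat).
Local Notation S := {mpoly K[n]}.
Local Notation mon := 'X_{1..n}.

Lemma gen_ideal_is_ideal (G : S -> Prop) : is_ideal (gen_ideal G).
Proof.
split.
- by move=> I [I0 _ _] _.
- move=> a b Ha Hb I HI HG; case: (HI) => _ HD _.
  exact: HD (Ha I HI HG) (Hb I HI HG).
- move=> r a Ha I HI HG; case: (HI) => _ _ HM; exact: HM (Ha I HI HG).
Qed.

Lemma gen_ideal_sub (G : S -> Prop) g : G g -> gen_ideal G g.
Proof. by move=> Gg I _ HG; apply: HG. Qed.

Lemma gen_ideal_min (G I : S -> Prop) :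
  is_ideal I -> (forall g, G g -> I g) -> forall p, gen_ideal G p -> I p.
Proof. by move=> HI HG p Hp; apply: Hp. Qed.

Lemma ideal0 (I : S -> Prop) : is_ideal I -> I 0.
Proof. by case. Qed.

Lemma idealD (I : S -> Prop) a b : is_ideal I -> I a -> I b -> I (a + b).
Proof. by case=> _ HD _; apply: HD. Qed.

Lemma idealM (I : S -> Prop) r a : is_ideal I -> I a -> I (r * a).
Proof. by case=> _ _ HM; apply: HM. Qed.

Lemma idealZ (I : S -> Prop) c p : is_ideal I -> I p -> I (c *: p).
Proof. by move=> HI Hp; rewrite -mul_mpolyC; apply: idealM. Qed.

Lemma idealB (I : S -> Prop) p q : is_ideal I -> I p -> I q -> I (p - q).
Proof. by move=> HI Hp Hq; rewrite -scaleN1r; apply: idealD => //; apply: idealZ. Qed.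

Lemma ideal_big (I : S -> Prop) (r : seq mon) (P : pred mon) (F : mon -> S) :
  is_ideal I -> (forall m, P m -> I (F m)) -> I (\sum_(m <- r | P m) F m).
Proof. by move=> [H0 HD _] HF; apply: big_ind. Qed.

Lemma ideal_eq_ideal (I1 I2 : S -> Prop) : ideal_eq I1 I2 -> is_ideal I2 -> is_ideal I1.
Proof.
move=> E [H0 HD HM]; split.
- exact/E.
- by move=> a b /E Ha /E Hb; apply/E; apply: HD.
- by move=> r a /E Ha; apply/E; apply: HM.
Qed.

Lemma gen_ideal_eq_ideal (I G : S -> Prop) : ideal_eq I (gen_ideal G) -> is_ideal I.
Proof. by move=> EI; apply: ideal_eq_ideal EI (gen_ideal_is_ideal G). Qed.

Lemma monomial_ideal_is_ideal (E : S -> Prop) : is_monomial_ideal E -> is_ideal E.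
Proof. by case=> G [_ /gen_ideal_eq_ideal]. Qed.

Lemma binomial_ideal_is_ideal (J : S -> Prop) : is_binomial_ideal J -> is_ideal J.
Proof. by case=> G [_ /gen_ideal_eq_ideal]. Qed.

Lemma ideal_sum_ideal (I1 I2 : S -> Prop) :
  is_ideal I1 -> is_ideal I2 -> is_ideal (ideal_sum I1 I2).
Proof.
move=> HI1 HI2; split.
- by exists 0, 0; rewrite addr0; split=> //; apply: ideal0.
- move=> _ _ [a1 [b1 [Ha1 Hb1 ->]]] [a2 [b2 [Ha2 Hb2 ->]]].
  by exists (a1 + a2), (b1 + b2); rewrite addrACA; split=> //; apply: idealD.
- move=> r _ [a [b [Ha Hb ->]]].
  by exists (r * a), (r * b); rewrite mulrDr; split=> //; apply: idealM.
Qed.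

Lemma ideal_suml (I1 I2 : S -> Prop) p : is_ideal I2 -> I1 p -> ideal_sum I1 I2 p.
Proof. by move=> HI2 Hp; exists p, 0; rewrite addr0; split=> //; apply: ideal0. Qed.

Lemma ideal_sumr (I1 I2 : S -> Prop) p : is_ideal I1 -> I2 p -> ideal_sum I1 I2 p.
Proof. by move=> HI1 Hp; exists 0, p; rewrite add0r; split=> //; apply: ideal0. Qed.

Lemma ideal_sum_monor (I A B : S -> Prop) :
  (forall p, A p -> B p) -> forall p, ideal_sum I A p -> ideal_sum I B p.
Proof. by move=> AB _ [a [b [Ha Hb ->]]]; exists a, b; split=> //; apply: AB. Qed.

Lemma ideal_sum_absorb (I E : S -> Prop) :
  is_ideal I -> forall p, ideal_sum I (ideal_sum I E) p -> ideal_sum I E p.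
Proof.
move=> HI _ [a [_ [Ha [a' [e [Ha' He ->]]] ->]]].
by exists (a + a'), e; rewrite addrA; split=> //; apply: idealD.
Qed.

Lemma gen_ideal_ind (G P : S -> Prop) :
  P 0 -> (forall a b, P a -> P b -> P (a + b)) ->
  (forall g c m, G g -> P (c *: (g * 'X_[m]))) ->
  forall p, gen_ideal G p -> P p.
Proof.
move=> P0 PD PG p Hp.
have HI : is_ideal (fun p => forall r, P (r * p)).
  split.
  - by move=> r; rewrite mulr0.
  - by move=> a b Ha Hb r; rewrite mulrDr; apply: PD.
  - by move=> r a Ha s; rewrite mulrA.
suff /(_ 1) : forall r, P (r * p) by rewrite mul1r.
apply: (Hp _ HI) => g Gg r.
rewrite (mpolyE r) big_distrl /=; apply: big_ind => // m _.
by rewrite -scalerAl mulrC; apply: PG.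
Qed.

Lemma size_msupp_term_multiple c (g : S) m :
  (size (msupp (c *: (g * 'X_[m]))) <= size (msupp g))%N.
Proof.
apply: (@leq_trans (size (msupp (g * 'X_[m])))).
  by apply: uniq_leq_size; [exact: msupp_uniq | exact: msuppZ_le].
by rewrite (perm_size (msuppMX _ _)) size_map.
Qed.

Lemma mpolyX_neq0 m : ('X_[m] : S) != 0.
Proof. by rewrite -msupp_eq0 msuppX. Qed.

Section LeadingMonomial.
Variable le : rel mon.
Hypothesis le_order : monomial_order le.

Lemma fold_max_spec (s : seq mon) :
  let l := foldr (fun m acc => if le acc m then m else acc) 0%MM s in
  (s != [::] -> l \in s) /\ (forall m, m \in s -> le m l).
Proof.
case: le_order => le_refl _ le_trans le_total [le0 _].
elim: s => [|x s [IHin IHmax]] //=; set l := foldr _ _ s.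
split.
  move=> _; case: ifP => Hx; first by rewrite mem_head.
  have s_nil : s != [::] by apply: contraFneq Hx => s0; rewrite /l s0 le0.
  by rewrite in_cons IHin ?orbT.
move=> m; rewrite in_cons => /orP [/eqP ->|Hm].
  case: ifP => Hx; first exact: le_refl.
  by case/orP: (le_total x l) => // H; rewrite H in Hx.
by case: ifP => Hx; [apply: le_trans _ _ _ (IHmax _ Hm) Hx | apply: IHmax].
Qed.

Lemma lead_mon_in (f : S) : f != 0 -> lead_mon le f \in msupp f.
Proof. by move=> f0; apply: (fold_max_spec (msupp f)).1; rewrite msupp_eq0. Qed.

Lemma lead_mon_max (f : S) m : m \in msupp f -> le m (lead_mon le f).
Proof. exact: (fold_max_spec (msupp f)).2. Qed.

Lemma lead_monX m : lead_mon le ('X_[m] : S) = m.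
Proof. by case: le_order => _ _ _ _ [le0 _]; rewrite /lead_mon msuppX /= le0. Qed.

Lemma lead_mon_sub (f g : S) : g != 0 -> {subset msupp g <= msupp f} ->
  lead_mon le f \in msupp g -> lead_mon le g = lead_mon le f.
Proof.
case: le_order => _ le_anti _ _ _ g0 gf Hf.
apply: le_anti; apply/andP; split; last exact: lead_mon_max.
by apply: lead_mon_max; apply: gf; apply: lead_mon_in.
Qed.

End LeadingMonomial.

Section Strip.
Variable I : S -> Prop.

Definition monb (m : mon) : bool :=
  if excluded_middle_informative (I 'X_[m]) then true else false.

Lemma monbP m : monb m <-> I 'X_[m].
Proof. by rewrite /monb; case: excluded_middle_informative. Qed.

Definition monomial_part (p : S) : S :=
  \sum_(m <- msupp p | monb m) p@_m *: 'X_[m].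
Definition strip (p : S) : S := p - monomial_part p.

Lemma mcoeff_monomial_part p k :
  (monomial_part p)@_k = if monb k then p@_k else 0.
Proof.
rewrite /monomial_part raddf_sum /=.
under eq_bigr => m _ do rewrite mcoeffZ mcoeffX.
rewrite big_mkcond /=.
have [Hk|Hk] := boolP (k \in msupp p).
  rewrite (bigD1_seq k) ?msupp_uniq //= eqxx mulr1 big1 ?addr0; first by case: monb.
  by move=> i /negbTE; rewrite eq_sym => ->; rewrite mulr0; case: monb.
rewrite big1_seq; first by move: Hk; rewrite -mcoeff_eq0 => /eqP ->; case: monb.
move=> i Hi; have /negbTE -> : i != k by apply: contraNneq Hk => <-.
by rewrite mulr0; case: monb.
Qed.

Lemma mcoeff_strip p k : (strip p)@_k = if monb k then 0 else p@_k.
Proof. by rewrite mcoeffB mcoeff_monomial_part; case: monb; rewrite ?subrr ?subr0. Qed.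

Lemma stripD a b : strip (a + b) = strip a + strip b.
Proof.
by apply/mpolyP => k; rewrite mcoeffD !mcoeff_strip mcoeffD; case: monb; rewrite ?addr0.
Qed.

Lemma strip0 : strip 0 = 0.
Proof. by apply/mpolyP => k; rewrite mcoeff_strip mcoeff0; case: monb. Qed.

Lemma msupp_strip p : {subset msupp (strip p) <= msupp p}.
Proof. by move=> k; rewrite !mcoeff_msupp mcoeff_strip; case: monb; rewrite ?eqxx. Qed.

Lemma msupp_strip_notin p k : k \in msupp (strip p) -> ~~ monb k.
Proof. by rewrite mcoeff_msupp mcoeff_strip; case: monb; rewrite ?eqxx. Qed.

Lemma msupp_strip_keep p k : k \in msupp p -> ~~ monb k -> k \in msupp (strip p).
Proof. by rewrite !mcoeff_msupp mcoeff_strip => + /negbTE ->. Qed.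

Lemma strip_id p : (forall k, k \in msupp p -> ~~ monb k) -> strip p = p.
Proof.
move=> Hp; apply/mpolyP => k; rewrite mcoeff_strip.
case Hk: (monb k) => //; apply/esym/eqP; rewrite mcoeff_eq0.
by apply: contraTN Hk => /Hp.
Qed.

Hypothesis I_ideal : is_ideal I.

Lemma strip_in p : I p -> I (strip p).
Proof.
move=> Hp; apply: idealB => //; apply: ideal_big => // m /monbP Hm.
exact: idealZ.
Qed.

(* An element of I with at most one term left after stripping strips to 0:
   a single surviving term c X^u would put X^u in I. *)
Lemma strip_small p : I p -> (size (msupp (strip p)) <= 1)%N -> strip p = 0.
Proof.
move=> Hp; set q := strip p => Hs.
case Eq: (msupp q) Hs => [|u [|? ?]] //= _; first exact: msuppnil0.
have Hu : u \in msupp q by rewrite Eq mem_head.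
have qu0 : q@_u != 0 by rewrite -mcoeff_msupp.
have q_term : q = q@_u *: 'X_[u] by rewrite {1}(mpolyE q) Eq big_seq1.
have : I 'X_[u].
  have -> : ('X_[u] : S) = (q@_u)^-1 *: q.
    by rewrite {2}q_term scalerA mulVf // scale1r.
  by apply: idealZ => //; apply: strip_in.
by move/monbP; rewrite (negbTE (msupp_strip_notin Hu)).
Qed.

Lemma strip_binomial (J : S -> Prop) h : is_ideal J ->
  (forall p, J p -> I p) -> J h -> (size (msupp h) <= 2)%N -> J (strip h).
Proof.
move=> HJ JI Jh h2.
have [Hh|Hh] := boolP (has monb (msupp h)); last first.
  by rewrite strip_id // => k Hk; apply: contra Hh => Mk; apply/hasP; exists k.
rewrite strip_small; [exact: ideal0 | exact: JI |].
have : (size (msupp (strip h)) <= count (predC monb) (msupp h))%N.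
  rewrite -size_filter; apply: uniq_leq_size; first exact: msupp_uniq.
  by move=> k Hk; rewrite mem_filter /= (msupp_strip_notin Hk) (msupp_strip Hk).
have := count_predC monb (msupp h); move: Hh; rewrite has_count; lia.
Qed.

Lemma strip_monomial_ideal (E : S -> Prop) : is_monomial_ideal E ->
  (forall p, E p -> I p) -> forall p, E p -> strip p = 0.
Proof.
move=> Emon EI; have HE := monomial_ideal_is_ideal Emon.
have [G [Gmon EG]] := Emon; move=> p /EG.
apply: (gen_ideal_ind (P := fun q => strip q = 0)).
- exact: strip0.
- by move=> a b Ha Hb; rewrite stripD Ha Hb addr0.
move=> g c m Gg; have [u gu] := Gmon g Gg.
have Hgm : E (c *: (g * 'X_[m])).
  apply: idealZ => //; rewrite mulrC; apply: idealM => //.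
  by apply/EG; apply: gen_ideal_sub.
apply: strip_small; first exact: EI Hgm.
apply: leq_trans (uniq_leq_size (msupp_uniq _) (@msupp_strip _)) _.
by apply: leq_trans (size_msupp_term_multiple _ _ _) _; rewrite gu msuppX.
Qed.

Lemma strip_binomial_ideal (J : S -> Prop) : is_binomial_ideal J ->
  (forall p, J p -> I p) -> forall p, J p -> J (strip p).
Proof.
move=> Jbin JI; have HJ := binomial_ideal_is_ideal Jbin.
have [G [Gbin JG]] := Jbin; move=> p /JG.
apply: (gen_ideal_ind (P := fun q => J (strip q))).
- by rewrite strip0; apply: ideal0.
- by move=> a b Ha Hb; rewrite stripD; apply: idealD.
move=> g c m Gg; apply: strip_binomial => //.
  apply: idealZ => //; rewrite mulrC; apply: idealM => //.
  by apply/JG; apply: gen_ideal_sub.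
exact: leq_trans (size_msupp_term_multiple _ _ _) (Gbin _ Gg).
Qed.

End Strip.

Lemma strip_sum_in_binomial (J F : S -> Prop) :
  is_binomial_ideal J -> is_monomial_ideal F ->
  forall f, ideal_sum J F f -> J (strip (ideal_sum J F) f).
Proof.
move=> Jbin Fmon _ [a [b [Ha Hb ->]]].
have [HJ HF] := (binomial_ideal_is_ideal Jbin, monomial_ideal_is_ideal Fmon).
have HJF := ideal_sum_ideal HJ HF.
rewrite stripD (strip_monomial_ideal HJF Fmon _ Hb) => [|p]; last exact: ideal_sumr.
rewrite addr0; apply: (strip_binomial_ideal HJF Jbin) Ha => p.
exact: ideal_suml.
Qed.

Lemma init_ideal_mono (le : rel mon) (I1 I2 : S -> Prop) :
  (forall p, I1 p -> I2 p) -> forall p, init_ideal le I1 p -> init_ideal le I2 p.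
Proof.
move=> I12; apply: gen_ideal_min; first exact: gen_ideal_is_ideal.
by move=> _ [f [Hf f0 ->]]; apply: gen_ideal_sub; exists f; split=> //; apply: I12.
Qed.

Lemma G_nice_binomial_monomial (le : rel mon) (J F : S -> Prop) :
  monomial_order le -> is_binomial_ideal J -> is_monomial_ideal F ->
  (forall m, ideal_sum J F 'X_[m] -> F 'X_[m]) -> G_nice le J F.
Proof.
move=> le_order Jbin Fmon F_sat.
have [HJ HF] := (binomial_ideal_is_ideal Jbin, monomial_ideal_is_ideal Fmon).
move=> p; split.
  apply: gen_ideal_min.
    exact: ideal_sum_ideal (gen_ideal_is_ideal _) (gen_ideal_is_ideal _).
  move=> _ [f [Hf f0 ->]]; set u := lead_mon le f.
  have [Fu|Fu] := boolP (monb (ideal_sum J F) u).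
    apply: ideal_sumr; first exact: gen_ideal_is_ideal.
    apply: gen_ideal_sub; exists 'X_[u].
    by rewrite lead_monX // mpolyX_neq0; split=> //; apply/F_sat/monbP.
  have us : u \in msupp (strip (ideal_sum J F) f).
    exact: msupp_strip_keep (lead_mon_in le_order f0) Fu.
  have s0 : strip (ideal_sum J F) f != 0.
    by apply: contraTneq us => ->; rewrite msupp0.
  apply: ideal_suml; first exact: gen_ideal_is_ideal.
  apply: gen_ideal_sub; exists (strip (ideal_sum J F) f).
  split=> //; first exact: strip_sum_in_binomial.
  by rewrite (lead_mon_sub le_order s0 (@msupp_strip _ _) us).
move=> [a [b [Ha Hb ->]]]; apply: (idealD (gen_ideal_is_ideal _)).
- by apply: init_ideal_mono Ha => q; apply: ideal_suml.
- by apply: init_ideal_mono Hb => q; apply: ideal_sumr.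
Qed.

End Ideals.

Theorem mainTheorem12 (K : fieldType) (n : nat) (le : rel 'X_{1..n})
  (J E : {mpoly K[n]} -> Prop) :
  monomial_order le ->
  is_binomial_ideal J ->
  is_monomial_ideal E ->
  ideal_eq (ideal_sum J E) (ideal_sum J (Gnice_closure le J E)).
Proof.
move=> le_order Jbin Emon.
have [HJ HE] := (binomial_ideal_is_ideal Jbin, monomial_ideal_is_ideal Emon).
have [GE [GEmon EG]] := Emon.
pose Fgen := fun q : {mpoly K[n]} => exists m, ideal_sum J E 'X_[m] /\ q = 'X_[m].
pose F := gen_ideal Fgen.
have Fmon : is_monomial_ideal F by exists Fgen; split=> // _ [m [_ ->]]; exists m.
have F_JE : forall p, F p -> ideal_sum J E p.
  by apply: gen_ideal_min => [|_ [m [Hm ->]]] //; apply: ideal_sum_ideal.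
have E_F : forall p, E p -> F p.
  move=> p /EG; apply: gen_ideal_min => [|g Gg]; first exact: gen_ideal_is_ideal.
  have [m gm] := GEmon g Gg; apply: gen_ideal_sub; exists m; split=> //.
  by rewrite -gm; apply: ideal_sumr => //; apply/EG; apply: gen_ideal_sub.
have F_sat : forall m, ideal_sum J F 'X_[m] -> F 'X_[m].
  move=> m /(ideal_sum_monor F_JE) /(ideal_sum_absorb HJ) Hm.
  by apply: gen_ideal_sub; exists m.
have Fnice : G_nice le J F := G_nice_binomial_monomial le_order Jbin Fmon F_sat.
move=> p; split.
- by apply: ideal_sum_monor => q Eq F' _ EF' _; apply: EF'.
- (* closure(E) ⊆ F ⊆ J + E, hence J + closure(E) ⊆ J + (J + E) = J + E *)
  move=> Hp; apply: (ideal_sum_absorb HJ); apply: ideal_sum_monor Hp => q Hq.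
  exact: F_JE (Hq F Fmon E_F Fnice).
Qed.
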